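(* Let $N\in\mathbb{N}$, $a\ge0$, $b>0$, $\alpha:=a+b-1$, $\beta:=b-1$, and let $z_1\le\dots\le z_N$ be the ordered zeros of the Jacobi polynomial $P_N^{(\alpha,\beta)}$. Let $\tilde S=(\tilde s_{i,j})_{i,j=1,\dots,N}$ be the matrix with $$\tilde s_{j,j}=4\sum_{l\ne j}\frac{1-z_j^2}{(z_j-z_l)^2}+2(a+b)\frac{1+z_j}{1-z_j}+2b\frac{1-z_j}{1+z_j},\qquad \tilde s_{i,j}=\frac{-4\sqrt{(1-z_j^2)(1-z_i^2)}}{(z_i-z_j)^2}\ (i\ne j),$$ and let $\lambda_k:=2k(2N+\alpha+\beta+1-k)$. Then for each $k=2,\dots,N$ there exists a polynomial $p_k$ of degree at most $k-2$ such that the vector $v_k:=\bigl(z_1^{k-1}\sqrt{1-z_1^2},\dots,z_N^{k-1}\sqrt{1-z_N^2}\bigr)^T$ satisfies $$\tilde S v_k=\Bigl((\lambda_k z_1^{k-1}+p_k(z_1))\sqrt{1-z_1^2},\dots,(\lambda_k z_N^{k-1}+p_k(z_N))\sqrt{1-z_N^2}\Bigr)^T.$$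
   Context: $P_N^{(\alpha,\beta)}$ denotes the classical Jacobi polynomial of degree $N$, orthogonal on $]-1,1[$ with respect to the weight $(1-x)^\alpha(1+x)^\beta$; its zeros are simple and lie in $]-1,1[$. *)

From mathcomp Require Import all_boot all_order all_algebra.
From mathcomp Require Import reals.
Set Implicit Arguments. Unset Strict Implicit. Unset Printing Implicit Defensive.
Import Order.TTheory GRing.Theory Num.Theory.
Local Open Scope ring_scope.

Definition gbinom (R : fieldType) (x : R) (k : nat) : R :=
  (\prod_(i < k) (x - i%:R)) / (k`!)%:R.

(* Classical Jacobi polynomial P_N^(al,be), explicit (Szego 4.3.2) form:
   P_N(x) = sum_{s=0}^N binom(N+al, N-s) binom(N+be, s) ((x-1)/2)^s ((x+1)/2)^(N-s). *)
Definition jacobi (R : fieldType) (N : nat) (al be : R) : {poly R} :=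
  \sum_(s < N.+1)
     (gbinom (N%:R + al) (N - s) * gbinom (N%:R + be) s) *:
       ((2^-1 *: ('X - 1)) ^+ s * (2^-1 *: ('X + 1)) ^+ (N - s)).

Definition Stilde (R : realType) (N : nat) (a b : R) (z : 'I_N -> R) : 'M[R]_N :=
  \matrix_(i < N, j < N)
    if i == j then
      4 * (\sum_(l < N | l != j) (1 - z j ^+ 2) / (z j - z l) ^+ 2)
      + 2 * (a + b) * ((1 + z j) / (1 - z j))
      + 2 * b * ((1 - z j) / (1 + z j))
    else
      - 4 * Num.sqrt ((1 - z j ^+ 2) * (1 - z i ^+ 2)) / (z i - z j) ^+ 2.

From HB Require Import structures.
From mathcomp Require Import all_boot all_order all_algebra.
From mathcomp Require Import reals.
From mathcomp Require Import ring lra zify.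
Set Implicit Arguments. Unset Strict Implicit. Unset Printing Implicit Defensive.
Import Order.TTheory GRing.Theory Num.Theory.
Local Open Scope ring_scope.

(* Conjugating S~ by diag(sqrt (1 - z_j^2)) turns row i, applied to a vector g, into
   D(z_i) g_i + 4 sum_(j <> i) ((1 - z_i^2) g_i - (1 - z_j^2) g_j) / (z_i - z_j)^2,
   with D the rational diagonal part.  For g = z^m, the second-order Taylor expansion of
   f(t) = (1 - t^2) t^m at z_i splits each summand into f'(z_i) / (z_i - z_j) plus a
   polynomial in z_i.  The remaining sum of 1 / (z_i - z_j) is given by the Stieltjes
   relation 2 (1 - z_i^2) sum_(j <> i) 1 / (z_i - z_j) = (al + be + 2) z_i + al - be,
   which is the Jacobi differential equation evaluated at the simple zero z_i; it cancels
   the poles of D at +-1 and leaves lambda_k z_i^m plus a polynomial of degree < m.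
   The differential equation is checked on Szego's explicit sum, term by term in the
   basis (X - 1)^s (X + 1)^t, where the contributions telescope; the zeros lie in ]-1,1[
   because all coefficients of that sum are positive when al, be > -1. *)

Lemma sum_shift_balance (V : comNzRingType) (N : nat) (A B : nat -> V)
    (F : nat -> nat -> V) :
  A 0%N = 0 -> B N = 0 -> (forall s, (s < N)%N -> A s.+1 = B s) ->
  \sum_(s < N.+1) (A s * F s (N - s)%N.+2 + B s * F s.+2 (N - s)%N)
  = \sum_(s < N.+1) (A s + B s) * F s.+1 (N - s)%N.+1.
Proof.
move=> A0 BN AB.
have shiftA : \sum_(s < N.+1) A s * F s (N - s)%N.+2
              = \sum_(s < N.+1) B s * F s.+1 (N - s)%N.+1.
  rewrite big_ord_recl [RHS]big_ord_recr /= A0 BN !mul0r add0r addr0.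
  by apply: eq_bigr => s _; rewrite /bump /= add1n AB // subnSK.
have shiftB : \sum_(s < N.+1) B s * F s.+2 (N - s)%N
              = \sum_(s < N.+1) A s * F s.+1 (N - s)%N.+1.
  rewrite big_ord_recr [RHS]big_ord_recl /= A0 BN !mul0r add0r addr0.
  by apply: eq_bigr => s _; rewrite /bump /= add1n AB // subnSK.
rewrite big_split /= shiftA shiftB addrC -big_split /=.
by apply: eq_bigr => s _; rewrite mulrDl.
Qed.

Section JacobiOperator.
Variable R : comNzRingType.
Implicit Types (al be lam : R) (p : {poly R}).

Definition jacobi_basis (s t : nat) : {poly R} := ('X - 1) ^+ s * ('X + 1) ^+ t.

Definition jacobi_op al be lam p : {poly R} :=
  (1 - 'X ^+ 2) * p^`()^`() + ((be - al)%:P - (al + be + 2)%:P * 'X) * p^`()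
  + lam%:P * p.

Fact jacobi_op_is_semilinear al be lam : semilinear (jacobi_op al be lam).
Proof.
by split=> [k p | p q]; rewrite /jacobi_op !(linearZ, linearD) /= -?mul_polyC; ring.
Qed.
HB.instance Definition _ al be lam :=
  GRing.isSemilinear.Build R {poly R} {poly R} _ (jacobi_op al be lam)
    (jacobi_op_is_semilinear al be lam).

Lemma size_jacobi_basis s t : size (jacobi_basis s t) = (s + t).+1.
Proof.
have U : 'X - 1 = 'X - (1 : R)%:P by rewrite polyC1.
have V : 'X + 1 = 'X - (-1 : R)%:P by rewrite polyCN opprK polyC1.
rewrite /jacobi_basis U V size_monicM ?monic_exp ?monicXsubC //; last first.
  by rewrite -size_poly_eq0 size_exp_XsubC.
by rewrite !size_exp_XsubC addSn addnS.
Qed.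

Lemma mul_deriv_XsubC_exp (c : R) n :
  ('X - c%:P) * (('X - c%:P) ^+ n)^`() = n%:R%:P * ('X - c%:P) ^+ n.
Proof.
rewrite deriv_exp derivXsubC mul1r -mulr_natl polyC_natr.
by case: n => [|n]; rewrite ?mul0r ?mulr0 // exprS /=; ring.
Qed.

Lemma jacobi_basis_deriv s t :
  ('X ^+ 2 - 1) * (jacobi_basis s t)^`() =
  s%:R%:P * jacobi_basis s t.+1 + t%:R%:P * jacobi_basis s.+1 t.
Proof.
have dU := mul_deriv_XsubC_exp 1 s; have dV := mul_deriv_XsubC_exp (-1) t.
rewrite polyCN opprK polyC1 in dV; rewrite polyC1 in dU.
rewrite /jacobi_basis derivM.
have -> : ('X ^+ 2 - 1 : {poly R})
      * ((('X - 1) ^+ s)^`() * ('X + 1) ^+ t + ('X - 1) ^+ s * (('X + 1) ^+ t)^`())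
    = ('X + 1) * ('X + 1) ^+ t * (('X - 1) * (('X - 1) ^+ s)^`())
      + ('X - 1) * ('X - 1) ^+ s * (('X + 1) * (('X + 1) ^+ t)^`()).
  by ring.
by rewrite dU dV !exprS; ring.
Qed.

(* The factor X^2 - 1 keeps every exponent natural. *)
Lemma jacobi_op_basis al be lam s t :
  ('X ^+ 2 - 1) * jacobi_op al be lam (jacobi_basis s t) =
    (lam - 2 * s%:R * t%:R - (be + 1) * s%:R - (al + 1) * t%:R)%:P
      * jacobi_basis s.+1 t.+1
  - (s%:R * (s%:R + al))%:P * jacobi_basis s t.+2
  - (t%:R * (t%:R + be))%:P * jacobi_basis s.+2 t.
Proof.
set W : {poly R} := 'X ^+ 2 - 1; set M := jacobi_basis s t.
have dW : W^`() = 2%:P * 'X.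
  by rewrite /W derivB derivXn derivC subr0 -mulr_natl polyC_natr.
have WWM2 : W ^+ 2 * M^`()^`() = W * (W * M^`())^`() - W^`() * (W * M^`()).
  by rewrite derivM; ring.
rewrite jacobi_basis_deriv derivD !deriv_mulC mulrDr ![W * (_%:P * _)]mulrCA
  !jacobi_basis_deriv in WWM2.
have -> : W * jacobi_op al be lam M =
    - (W ^+ 2 * M^`()^`()) + ((be - al)%:P - (al + be + 2)%:P * 'X) * (W * M^`())
    + lam%:P * (W * M).
  by rewrite /jacobi_op /W; ring.
by rewrite WWM2 dW jacobi_basis_deriv /M /W /jacobi_basis !exprS; ring.
Qed.

End JacobiOperator.
Arguments jacobi_basis {R} s t.

Section JacobiODE.
Variable R : numFieldType.
Implicit Types al be : R.

Definition jacobi_coef (N : nat) al be (s : nat) : R :=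
  gbinom (N%:R + al) (N - s) * gbinom (N%:R + be) s.

Lemma jacobiE N al be : jacobi N al be =
  2 ^- N *: \sum_(s < N.+1) jacobi_coef N al be s *: jacobi_basis s (N - s).
Proof.
rewrite scaler_sumr; apply: eq_bigr => s _.
rewrite !exprZn -scalerAl -scalerAr !scalerA -mulrA -exprD subnKC.
  by rewrite exprVn mulrC.
by rewrite -ltnS ltn_ord.
Qed.

Lemma size_jacobi N al be : (size (jacobi N al be) <= N.+1)%N.
Proof.
rewrite jacobiE; apply: (leq_trans (size_scale_leq _ _)).
apply: (leq_trans (size_sum _ _ _)); apply/bigmax_leqP => s _.
apply: (leq_trans (size_scale_leq _ _)).
by rewrite size_jacobi_basis subnKC // -ltnS ltn_ord.
Qed.

Lemma gbinomSr (x : R) m : gbinom x m.+1 * m.+1%:R = gbinom x m * (x - m%:R).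
Proof.
rewrite /gbinom big_ord_recr /= factS natrM.
have fact_neq0 : m`!%:R != 0 :> R by rewrite pnatr_eq0 -lt0n fact_gt0.
by field; rewrite fact_neq0 nat1r pnatr_eq0.
Qed.

Lemma jacobi_coefS N al be s : (s < N)%N ->
  jacobi_coef N al be s.+1 * (s.+1%:R * (s.+1%:R + al)) =
  jacobi_coef N al be s * ((N - s)%:R * ((N - s)%:R + be)).
Proof.
move=> lt_sN; rewrite /jacobi_coef.
have := gbinomSr (N%:R + al) (N - s.+1); rewrite subnSK // => Hal.
have Hbe := gbinomSr (N%:R + be) s.
have eNs : (N - s)%:R = N%:R - s%:R :> R by rewrite natrB // ltnW.
have eNs1 : (N - s.+1)%:R = N%:R - s%:R - 1 :> R by rewrite natrB // -nat1r; ring.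
rewrite eNs1 eNs in Hal; rewrite eNs -nat1r in Hbe *.
transitivity ((gbinom (N%:R + al) (N - s.+1) * (N%:R + al - (N%:R - s%:R - 1)))
              * (gbinom (N%:R + be) s.+1 * (1 + s%:R))); first by ring.
by rewrite -Hal Hbe; ring.
Qed.

Theorem jacobi_ode N al be :
  jacobi_op al be (N%:R * (N%:R + al + be + 1)) (jacobi N al be) = 0.
Proof.
set lam := N%:R * _.
have W_neq0 : ('X ^+ 2 - 1 : {poly R}) != 0.
  by rewrite -size_poly_eq0 -polyC1 size_XnsubC.
suff : ('X ^+ 2 - 1) * jacobi_op al be lam (jacobi N al be) = 0.
  by move/eqP; rewrite mulf_eq0 (negbTE W_neq0) => /eqP.
rewrite jacobiE linearZ linear_sum /= -scalerAr mulr_sumr.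
under eq_bigr do rewrite linearZ /= -scalerAr jacobi_op_basis.
set A := fun s => (jacobi_coef N al be s * (s%:R * (s%:R + al)))%:P.
set B := fun s => (jacobi_coef N al be s * ((N - s)%:R * ((N - s)%:R + be)))%:P.
have A0 : A 0%N = 0 by rewrite /A mul0r mulr0 polyC0.
have BN : B N = 0 by rewrite /B subnn mul0r mulr0 polyC0.
have AB s : (s < N)%N -> A s.+1 = B s by move=> lt_sN; rewrite /A /B jacobi_coefS.
rewrite [X in _ *: X](_ : _ = 0) ?scaler0 //.
transitivity (\sum_(s < N.+1) ((A s + B s) * jacobi_basis s.+1 (N - s)%N.+1
    - (A s * jacobi_basis s (N - s)%N.+2 + B s * jacobi_basis s.+2 (N - s)%N))).
  apply: eq_bigr => s _; rewrite /A /B /lam -mul_polyC natrB; first by ring.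
  by rewrite -ltnS.
by rewrite sumrB (sum_shift_balance jacobi_basis A0 BN AB) subrr.
Qed.

End JacobiODE.

Section JacobiRoots.
Variable R : realFieldType.
Implicit Types (al be x : R).

Lemma gbinom_gt0 x m : m%:R - 1 < x -> 0 < gbinom x m.
Proof.
move=> lt_mx; rewrite /gbinom divr_gt0 ?ltr0n ?fact_gt0 //.
apply: prodr_gt0 => i _; have : (i.+1 <= m)%N := ltn_ord i.
by rewrite -(ler_nat R) -nat1r => le_im; lra.
Qed.

Lemma jacobi_coef_gt0 N al be s : -1 < al -> -1 < be -> (s <= N)%N ->
  0 < jacobi_coef N al be s.
Proof.
move=> al_gt be_gt le_sN; rewrite /jacobi_coef mulr_gt0 // gbinom_gt0 //.
- suff : (N - s)%:R <= N%:R :> R by lra.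
  by rewrite ler_nat leq_subr.
- suff : s%:R <= N%:R :> R by lra.
  by rewrite ler_nat.
Qed.

Lemma horner_jacobi N al be x : (jacobi N al be).[x] =
  2 ^- N * \sum_(s < N.+1) jacobi_coef N al be s * ((x - 1) ^+ s * (x + 1) ^+ (N - s)).
Proof.
rewrite jacobiE hornerZ horner_sum; congr (_ * _); apply: eq_bigr => s _.
by rewrite hornerZ hornerM !horner_exp !hornerE.
Qed.

Lemma horner_jacobi_gt0 N al be x : -1 < al -> -1 < be -> 1 <= x ->
  0 < (jacobi N al be).[x].
Proof.
move=> al_gt be_gt x_ge1; rewrite horner_jacobi mulr_gt0 ?invr_gt0 ?exprn_gt0 //.
rewrite big_ord_recl /=; apply: ltr_pwDl.
  by rewrite mulr_gt0 ?jacobi_coef_gt0 // expr0 mul1r exprn_gt0 //; lra.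
apply: sumr_ge0 => s _; apply: mulr_ge0.
  by apply: ltW; apply: jacobi_coef_gt0 => //; apply: ltn_ord.
by rewrite mulr_ge0 ?exprn_ge0 //; lra.
Qed.

Lemma horner_jacobiN N al be x :
  (jacobi N al be).[- x] = (-1) ^+ N * (jacobi N be al).[x].
Proof.
rewrite !horner_jacobi mulrCA; congr (_ * _).
rewrite mulr_sumr (reindex_inj rev_ord_inj); apply: eq_bigr => s _ /=.
have le_sN : (s <= N)%N by rewrite -ltnS.
rewrite subSS /jacobi_coef subKn // -[N in (-1) ^+ N](subnK le_sN) exprD.
rewrite -opprD [- x + 1]addrC -[1 - x]opprB.
by rewrite [(- (x + 1)) ^+ _]exprNn [(- (x - 1)) ^+ _]exprNn; ring.
Qed.

Lemma jacobi_root_bounded N al be x : -1 < al -> -1 < be ->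
  root (jacobi N al be) x -> -1 < x < 1.
Proof.
move=> al_gt be_gt /eqP Px0; rewrite !ltNge; apply/andP; split; apply/negP => hx.
- suff : 0 < (jacobi N be al).[- x] by rewrite horner_jacobiN Px0 mulr0 ltxx.
  by apply: horner_jacobi_gt0 => //; lra.
- suff : 0 < (jacobi N al be).[x] by rewrite Px0 ltxx.
  exact: horner_jacobi_gt0.
Qed.

End JacobiRoots.

Section SimpleRoots.
Variable R : fieldType.

Lemma horner_deriv_prod_XsubC (I : Type) (r : seq I) (P : pred I) (f : I -> R) x :
  (forall i, P i -> x != f i) ->
  ((\prod_(i <- r | P i) ('X - (f i)%:P))^`()).[x]
  = (\prod_(i <- r | P i) ('X - (f i)%:P)).[x] * \sum_(i <- r | P i) (x - f i)^-1.
Proof.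
move=> xf_neq; elim: r => [|j r IHr].
  by rewrite !big_nil -polyC1 derivC horner0 mulr0.
rewrite !big_cons; case: ifP => // Pj.
rewrite derivM derivXsubC mul1r !hornerD !hornerM IHr !hornerXsubC.
have xfj_neq0 : x - f j != 0 by rewrite subr_eq0 xf_neq.
by field.
Qed.

Lemma prod_XsubC_roots N (p : {poly R}) (z : 'I_N -> R) :
  (size p <= N.+1)%N -> injective z -> (forall i, root p (z i)) ->
  p = lead_coef p *: \prod_(l < N) ('X - (z l)%:P).
Proof.
move=> szp zinj zroot; have [-> | p_neq0] := eqVneq p 0.
  by rewrite lead_coef0 scale0r.
have all_root : all (root p) (map z (index_enum 'I_N)) by apply/allP => _ /mapP[l _ ->].
have uniq_z : uniq (map z (index_enum 'I_N)) by rewrite map_inj_uniq // index_enum_uniq.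
have sz_z : size (map z (index_enum 'I_N)) = N.
  by rewrite size_map /index_enum unlock /= -enumT size_enum_ord.
have -> : \prod_(l < N) ('X - (z l)%:P) = \prod_(x <- map z (index_enum 'I_N)) ('X - x%:P).
  by rewrite big_map.
rewrite -all_roots_prod_XsubC // ?uniq_rootsE // sz_z.
by apply/eqP; rewrite eqn_leq szp -sz_z max_poly_roots.
Qed.

Variables (N : nat) (z : 'I_N -> R).
Let q := \prod_(l < N) ('X - (z l)%:P).

Lemma deriv_prod_XsubC_root i : q^`().[z i] = \prod_(l < N | l != i) (z i - z l).
Proof.
rewrite /q (bigD1 i) //= derivM derivXsubC mul1r hornerD hornerM hornerXsubC.
rewrite subrr mul0r addr0 horner_prod.
by apply: eq_bigr => l _; rewrite hornerXsubC.
Qed.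

Lemma deriv2_prod_XsubC_root i : injective z ->
  q^`()^`().[z i] = 2 * q^`().[z i] * \sum_(l < N | l != i) (z i - z l)^-1.
Proof.
move=> zinj; rewrite /q (bigD1 i) //=; set Q := \prod_(l < N | l != i) _.
have zi_neq l : l != i -> z i != z l by apply: contraNneq => /zinj ->.
rewrite derivM derivXsubC mul1r derivD derivM derivXsubC mul1r.
rewrite !(hornerD, hornerM, hornerN, hornerX, hornerC) subrr !mul0r !addr0.
by rewrite horner_deriv_prod_XsubC //; ring.
Qed.

End SimpleRoots.

Theorem jacobi_stieltjes (R : numFieldType) N (al be : R) (z : 'I_N -> R) :
  jacobi N al be != 0 -> injective z -> (forall i, root (jacobi N al be) (z i)) ->
  forall i, 2 * (1 - z i ^+ 2) * \sum_(l < N | l != i) (z i - z l)^-1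
            = (al + be + 2) * z i + (al - be).
Proof.
move=> P_neq0 zinj zroot i.
set P := jacobi N al be; set S := \sum_(l < N | l != i) (z i - z l)^-1.
have P_eq := prod_XsubC_roots (size_jacobi N al be) zinj zroot; rewrite -/P in P_eq.
have dP : P^`().[z i] = lead_coef P * \prod_(l < N | l != i) (z i - z l).
  by rewrite {1}P_eq derivZ hornerZ deriv_prod_XsubC_root.
have ddP : P^`()^`().[z i] = 2 * P^`().[z i] * S.
  rewrite [in LHS]P_eq [in RHS]P_eq !derivZ !hornerZ deriv2_prod_XsubC_root //.
  by rewrite -/S; ring.
have dP_neq0 : P^`().[z i] != 0.
  rewrite dP mulf_neq0 ?lead_coef_eq0 //; apply/prodf_neq0 => l l_neq_i.
  by rewrite subr_eq0; apply: contra l_neq_i => /eqP /zinj ->.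
have ode := congr1 (horner^~ (z i)) (jacobi_ode N al be).
rewrite /jacobi_op -/P !(hornerD, hornerN, hornerM, hornerC, hornerX, horner_exp) in ode.
rewrite (eqP (zroot i)) ddP in ode.
have : (2 * (1 - z i ^+ 2) * S - ((al + be + 2) * z i + (al - be))) * P^`().[z i] = 0.
  by rewrite -ode; ring.
by move/eqP; rewrite mulf_eq0 (negbTE dP_neq0) orbF subr_eq0 => /eqP.
Qed.

(* The second-order Taylor remainder of t^m at x, divided by (y - x)^2, as a polynomial
   in x (taylor_quotP). *)
Fixpoint taylor_quot (R : nzRingType) (m : nat) (y : R) : {poly R} :=
  if m is n.+1 then y *: taylor_quot n y + n%:R *: 'X^(n.-1) else 0.
Arguments taylor_quot {R} : simpl never.

Section TaylorQuot.
Variable R : comNzRingType.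
Implicit Types x y : R.

Lemma horner_taylor_quotS m x y :
  (taylor_quot m.+1 y).[x] = y * (taylor_quot m y).[x] + m%:R * x ^+ m.-1.
Proof. by rewrite /= hornerD !hornerZ hornerXn. Qed.

Lemma taylor_quotP m x y :
  y ^+ m - x ^+ m - m%:R * x ^+ m.-1 * (y - x) = (taylor_quot m y).[x] * (y - x) ^+ 2.
Proof.
elim: m => [|m IHm]; first by rewrite /= horner0 mul0r; ring.
rewrite horner_taylor_quotS; case: m IHm => [|m] IHm; first by rewrite /= horner0; ring.
rewrite [LHS](_ : _ = y * (y ^+ m.+1 - x ^+ m.+1 - m.+1%:R * x ^+ m * (y - x))
                    + m.+1%:R * x ^+ m * (y - x) ^+ 2); first by rewrite IHm; ring.
by rewrite /= !exprS -nat1r; ring.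
Qed.

Lemma taylor_quot_diag m x : 2 * (taylor_quot m x).[x] = m%:R * (m%:R - 1) * x ^+ m.-2.
Proof.
elim: m => [|m IHm]; first by rewrite horner0 mulr0 !mul0r.
rewrite horner_taylor_quotS; case: m IHm => [|[|m]] IHm.
- by rewrite /= horner0; ring.
- by rewrite /= horner_taylor_quotS /= horner0; ring.
- by rewrite mulrDr mulrCA IHm /= -!nat1r !exprS; ring.
Qed.

Lemma size_taylor_quot m y : (size (taylor_quot m y) <= m.-1)%N.
Proof.
elim: m => [|m IHm]; first by rewrite size_poly0.
rewrite /=; apply: (leq_trans (size_polyD _ _)); rewrite geq_max; apply/andP; split.
  by apply: (leq_trans (size_scale_leq _ _)); apply: (leq_trans IHm); lia.
case: m {IHm} => [|m]; first by rewrite scale0r size_poly0.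
by apply: (leq_trans (size_scale_leq _ _)); rewrite size_polyXn.
Qed.

End TaylorQuot.

Section StildeRows.
Variable R : numFieldType.

Lemma pair_term_split (x y : R) m : x != y ->
  ((1 - x ^+ 2) * x ^+ m - (1 - y ^+ 2) * y ^+ m) / (x - y) ^+ 2
  = (m%:R * x ^+ m.-1 - m.+2%:R * x ^+ m.+1) / (x - y)
    - (taylor_quot m y).[x] + y * (taylor_quot m.+1 y).[x] + m.+1%:R * x ^+ m.
Proof.
move=> x_neq_y; have yx_neq0 : y - x != 0 by rewrite subr_eq0 eq_sym.
have xy_neq0 : x - y != 0 by rewrite subr_eq0.
have Tm : (taylor_quot m y).[x] =
    (y ^+ m - x ^+ m - m%:R * x ^+ m.-1 * (y - x)) / (y - x) ^+ 2.
  by rewrite taylor_quotP mulfK // expf_neq0.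
have Tm1 : y * (taylor_quot m.+1 y).[x] =
    (y ^+ m.+2 - x ^+ m.+2 - m.+2%:R * x ^+ m.+1 * (y - x)) / (y - x) ^+ 2
    - m.+1%:R * x ^+ m.
  by rewrite taylor_quotP mulfK ?expf_neq0 // horner_taylor_quotS addrK.
rewrite Tm Tm1 !exprS; move: (x ^+ m) (y ^+ m) (x ^+ m.-1) => X Y Z.
by field; rewrite xy_neq0 yx_neq0.
Qed.

(* The polynomial p_k of the statement, indexed by m = k - 1. *)
Definition stilde_lower (a : R) N (z : 'I_N -> R) (m : nat) : {poly R} :=
  (2 * m%:R * a) *: 'X^(m.-1) + (2 * m%:R * (m%:R - 1)) *: 'X^(m.-2)
  - 4 *: \sum_(j < N) taylor_quot m (z j)
  + 4 *: \sum_(j < N) z j *: taylor_quot m.+1 (z j).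

Lemma size_stilde_lower a N (z : 'I_N -> R) n :
  (size (stilde_lower a z n.+1) <= n.+1)%N.
Proof.
have size_sum_le (F : 'I_N -> {poly R}) d :
    (forall j, size (F j) <= d)%N -> (size (\sum_(j < N) F j)%R <= d)%N.
  by move=> le_Fd; apply: (leq_trans (size_sum _ _ _)); apply/bigmax_leqP => j _.
have size_scale_le c (p : {poly R}) d : (size p <= d)%N -> (size (c *: p) <= d)%N.
  exact/leq_trans/size_scale_leq.
have size_add_le (p q : {poly R}) d :
    (size p <= d)%N -> (size q <= d)%N -> (size (p + q)%R <= d)%N.
  by move=> le_pd le_qd; rewrite (leq_trans (size_polyD _ _)) // geq_max le_pd.
rewrite /stilde_lower.
apply: (size_add_le); first apply: (size_add_le); first apply: (size_add_le).
- by apply: (size_scale_le); rewrite size_polyXn.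
- by apply: (size_scale_le); rewrite size_polyXn /=; lia.
- rewrite size_polyN; apply/size_scale_le/size_sum_le => j.
  by apply: (leq_trans (size_taylor_quot _ _)) => /=; lia.
- by apply/size_scale_le/size_sum_le => j; apply/size_scale_le/size_taylor_quot.
Qed.

Lemma horner_stilde_lower a N (z : 'I_N -> R) m i :
  (stilde_lower a z m).[z i] =
    2 * m%:R * a * z i ^+ m.-1 + 2 * m%:R * (m%:R - 1) * z i ^+ m.-2
    - 4 * ((taylor_quot m (z i)).[z i]
           + \sum_(j < N | j != i) (taylor_quot m (z j)).[z i])
    + 4 * (z i * (taylor_quot m.+1 (z i)).[z i]
           + \sum_(j < N | j != i) z j * (taylor_quot m.+1 (z j)).[z i]).
Proof.
have sumU : \sum_(j < N) (z j *: taylor_quot m.+1 (z j)).[z i]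
    = z i * (taylor_quot m.+1 (z i)).[z i]
      + \sum_(j < N | j != i) z j * (taylor_quot m.+1 (z j)).[z i].
  by rewrite (bigD1 i) //= hornerZ; under eq_bigr do rewrite hornerZ.
(* Only three [hornerD]: a repeated one would unfold [taylor_quot] itself. *)
rewrite /stilde_lower 3!hornerD hornerN !hornerZ !hornerXn !horner_sum sumU.
by rewrite (bigD1 i).
Qed.

Lemma stilde_row_monomial a b N (z : 'I_N -> R) i n :
  injective z -> 1 - z i != 0 -> 1 + z i != 0 ->
  2 * (1 - z i ^+ 2) * \sum_(l < N | l != i) (z i - z l)^-1 = (a + 2 * b) * z i + a ->
  (2 * (a + b) * ((1 + z i) / (1 - z i)) + 2 * b * ((1 - z i) / (1 + z i))) * z i ^+ n.+1
  + 4 * \sum_(j < N | j != i)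
          ((1 - z i ^+ 2) * z i ^+ n.+1 - (1 - z j ^+ 2) * z j ^+ n.+1) / (z i - z j) ^+ 2
  = 2 * n.+2%:R * (2 * N%:R + (a + b - 1) + (b - 1) + 1 - n.+2%:R) * z i ^+ n.+1
    + (stilde_lower a z n.+1).[z i].
Proof.
move=> zinj zi_neq1 zi_neqN1 stieltjes.
set x := z i; set S := \sum_(l < N | l != i) (x - z l)^-1.
set A := \sum_(j < N | j != i) (taylor_quot n.+1 (z j)).[x].
set B := \sum_(j < N | j != i) z j * (taylor_quot n.+2 (z j)).[x].
have count : \sum_(j < N | j != i) (1 : R) = N%:R - 1.
  have : \sum_(j < N) (1 : R) = N%:R by rewrite sumr_const card_ord.
  by rewrite (bigD1 i) //= => <-; rewrite addrAC subrr add0r.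
have x_neq j : j != i -> x != z j by apply: contra => /eqP /zinj ->.
have pairs : \sum_(j < N | j != i)
      ((1 - x ^+ 2) * x ^+ n.+1 - (1 - z j ^+ 2) * z j ^+ n.+1) / (x - z j) ^+ 2
    = (n.+1%:R * x ^+ n - n.+3%:R * x ^+ n.+2) * S - A + B
      + (N%:R - 1) * (n.+2%:R * x ^+ n.+1).
  rewrite (eq_bigr _ (fun j j_neq_i => pair_term_split n.+1 (x_neq j j_neq_i))).
  rewrite /S /A /B mulr_sumr -count mulr_suml -sumrN -!big_split /=.
  by apply: eq_bigr => j _; ring.
have S_eq : S = ((a + 2 * b) * x + a) / (2 * (1 - x ^+ 2)).
  rewrite -stieltjes mulrC mulKf //.
  by rewrite (_ : 1 - x ^+ 2 = (1 - x) * (1 + x)) ?mulf_neq0 ?pnatr_eq0 //; ring.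
have diag1 : (taylor_quot n.+1 x).[x] = n.+1%:R * (n.+1%:R - 1) * x ^+ n.-1 / 2.
  by rewrite -taylor_quot_diag; field.
have diag2 : (taylor_quot n.+2 x).[x] = n.+2%:R * (n.+2%:R - 1) * x ^+ n / 2.
  by rewrite -taylor_quot_diag; field.
rewrite pairs horner_stilde_lower -/x -/A -/B S_eq diag1 diag2 !exprS -!nat1r.
move: (x ^+ n) (x ^+ n.-1) => X Y.
field; rewrite zi_neq1 zi_neqN1 /= (_ : 1 - x * x = (1 - x) * (1 + x)); last by ring.
by rewrite mulf_neq0.
Qed.

End StildeRows.

Lemma Stilde_mul_col_sqrt (R : realType) N (a b : R) (z g : 'I_N -> R) :
  (forall j, 0 <= 1 - z j ^+ 2) ->
  Stilde a b z *m \col_j (g j * Num.sqrt (1 - z j ^+ 2)) =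
  \col_i (((2 * (a + b) * ((1 + z i) / (1 - z i)) + 2 * b * ((1 - z i) / (1 + z i))) * g i
           + 4 * \sum_(j < N | j != i)
                   ((1 - z i ^+ 2) * g i - (1 - z j ^+ 2) * g j) / (z i - z j) ^+ 2)
          * Num.sqrt (1 - z i ^+ 2)).
Proof.
move=> w_ge0; apply/matrixP => i k; rewrite !mxE (bigD1 i) //= /Stilde !mxE eqxx.
rewrite [X in _ + X](eq_bigr (fun j => Num.sqrt (1 - z i ^+ 2) * 4
                                  * (- (1 - z j ^+ 2) * g j / (z i - z j) ^+ 2))); last first.
  move=> j j_neq_i; rewrite !mxE eq_sym (negbTE j_neq_i) sqrtrM //.
  by rewrite -[in RHS](sqr_sqrtr (w_ge0 j)); ring.
have split_sum : \sum_(j < N | j != i)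
      ((1 - z i ^+ 2) * g i - (1 - z j ^+ 2) * g j) / (z i - z j) ^+ 2
    = (\sum_(j < N | j != i) (1 - z i ^+ 2) / (z i - z j) ^+ 2) * g i
      + \sum_(j < N | j != i) - (1 - z j ^+ 2) * g j / (z i - z j) ^+ 2.
  by rewrite mulr_suml -big_split; apply: eq_bigr => j _ /=; ring.
by rewrite -[X in _ + X]mulr_sumr split_sum; ring.
Qed.

Theorem lemma3p4 (R : realType) (N : nat) (a b : R) (z : 'I_N -> R) :
  0 <= a -> 0 < b ->
  {homo z : i j / (i < j)%N >-> i < j} ->
  (forall i, root (jacobi N (a + b - 1) (b - 1)) (z i)) ->
  forall k : nat, (2 <= k <= N)%N ->
  exists p : {poly R}, (size p <= k.-1)%N /\
    Stilde a b z *m (\col_i (z i ^+ k.-1 * Num.sqrt (1 - z i ^+ 2)))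
    = \col_i ((2 * k%:R * (2 * N%:R + (a + b - 1) + (b - 1) + 1 - k%:R)
                 * z i ^+ k.-1 + p.[z i]) * Num.sqrt (1 - z i ^+ 2)).
Proof.
move=> a_ge0 b_gt0 z_incr zroot [|[|n]] // /andP[_ _].
have zinj : injective z.
  move=> i j zij; apply/val_inj.
  by case: (ltngtP i j) => [/z_incr | /z_incr | //]; rewrite zij ltxx.
have al_gt : -1 < a + b - 1 by lra.
have be_gt : -1 < b - 1 by lra.
have z_in j : -1 < z j < 1 := jacobi_root_bounded al_gt be_gt (zroot j).
have P_neq0 : jacobi N (a + b - 1) (b - 1) != 0.
  apply: contraTneq (horner_jacobi_gt0 N al_gt be_gt (lexx 1)) => ->.
  by rewrite horner0 ltxx.
exists (stilde_lower a z n.+1); split; first exact: size_stilde_lower.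
rewrite Stilde_mul_col_sqrt => [|j]; last by have /andP[] := z_in j; nra.
apply/matrixP => i j; rewrite !mxE; congr (_ * _).
have /andP[zi_gt zi_lt] := z_in i.
apply: stilde_row_monomial => //; try by apply/eqP => h; lra.
by rewrite (jacobi_stieltjes P_neq0 zinj zroot); ring.
Qed.
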